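(* Work in the Poincaré ball model of $\mathbb{H}^3$ with the notation $S(x)$, $H(x)$, $P_{4,3}(a)$ below. Fix an integer $n>4$ and let $a=a_n>\sqrt2$ be the (unique) value for which the faces of $P_{4,3}(a)$ meet at dihedral angle $2\pi/n$. Consider $b$ with $b>\sqrt3$ and $b>a$, so that $P_{4,3}(b)$ is a finite cube lying inside $P_{4,3}(a)$. For a face $F$ of $P_{4,3}(b)$ (lying on $S(be_i)$ for some signed coordinate vector $e_i$), let $F'$ be the image of $F$ under the hyperbolic reflection (sphere inversion) in the corresponding face $S(ae_i)$ of $P_{4,3}(a)$. Then $F$ and $F'$ are the bottom and top of a prism over a square whose four lateral faces are hyperbolic rectangles. There is a unique value of $b$ (in the range $b>\max(a,\sqrt3)$) for which these lateral rectangles are squares.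
   Context: For $x\in\mathbb{R}^3$ with $|x|>1$, $S(x)$ is the sphere centered at $x$ with radius $\sqrt{|x|^2-1}$; its intersection with the unit ball is a hyperbolic plane. $H(x)$ is the unbounded component of $\mathbb{R}^3\setminus S(x)$. For $a>1$, $P_{4,3}(a)$ is the intersection of the unit ball with $H(ax)$ for all $x\in\{(\pm1,0,0),(0,\pm1,0),(0,0,\pm1)\}$ (a generalized hyperbolic cube). For $a>\sqrt2$ adjacent faces meet at angle $\alpha$ with $\cos\alpha=1/(a^2-1)$. *)

From Stdlib Require Import Reals.
Open Scope R_scope.

Definition R3 : Type := (R * R * R)%type.

Definition vadd (p q : R3) : R3 :=
  let '(p1, p2, p3) := p in let '(q1, q2, q3) := q in (p1 + q1, p2 + q2, p3 + q3).
Definition vscale (c : R) (p : R3) : R3 :=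
  let '(p1, p2, p3) := p in (c * p1, c * p2, c * p3).
Definition vsub (p q : R3) : R3 := vadd p (vscale (-1) q).
Definition dot (p q : R3) : R :=
  let '(p1, p2, p3) := p in let '(q1, q2, q3) := q in p1 * q1 + p2 * q2 + p3 * q3.
Definition norm2 (p : R3) : R := dot p p.

Inductive axis : Type := AX | AY | AZ.
Definition sgnR (s : bool) : R := if s then 1 else -1.
Definition svec (i : axis) (s : bool) : R3 :=
  match i with
  | AX => (sgnR s, 0, 0)
  | AY => (0, sgnR s, 0)
  | AZ => (0, 0, sgnR s)
  end.

Definition onS (x p : R3) : Prop := norm2 (vsub p x) = norm2 x - 1.
(* H(x): unbounded component of R^3 \ S(x), i.e. the exterior of the sphere *)
Definition inH (x p : R3) : Prop := norm2 (vsub p x) > norm2 x - 1.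
Definition inBall (p : R3) : Prop := norm2 p < 1.

Definition P43 (a : R) (p : R3) : Prop :=
  inBall p /\ forall (i : axis) (s : bool), inH (vscale a (svec i s)) p.

Definition arcosh (t : R) : R := ln (t + sqrt (t * t - 1)).
Definition hdist (p q : R3) : R :=
  arcosh (1 + 2 * norm2 (vsub p q) / ((1 - norm2 p) * (1 - norm2 q))).

(* hyperbolic reflection in the plane S(x) = inversion in the sphere S(x) *)
Definition hrefl (x p : R3) : R3 :=
  vadd x (vscale ((norm2 x - 1) / norm2 (vsub p x)) (vsub p x)).

Definition cube_vertex (b : R) (v : R3) : Prop :=
  inBall v /\ exists sx sy sz : bool,
    onS (vscale b (svec AX sx)) v /\ onS (vscale b (svec AY sy)) v /\
    onS (vscale b (svec AZ sz)) v.

Definition face_edge (b : R) (i : axis) (s : bool) (v w : R3) : Prop :=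
  cube_vertex b v /\ cube_vertex b w /\ v <> w /\
  onS (vscale b (svec i s)) v /\ onS (vscale b (svec i s)) w /\
  exists (j : axis) (t : bool), j <> i /\
    onS (vscale b (svec j t)) v /\ onS (vscale b (svec j t)) w.

(* The prism over the face F = P_{4,3}(b) cap S(b e) has top F' = image of F
   under the reflection in S(a e).  Its lateral face over the edge {v,w} of F
   is the quadrilateral v, w, w', v' (w' , v' the reflected vertices).
   It is a square iff its four sides have equal hyperbolic length. *)
Definition lateral_faces_are_squares (a b : R) : Prop :=
  forall (i : axis) (s : bool) (v w : R3),
    face_edge b i s v w ->
    let v' := hrefl (vscale a (svec i s)) v in
    let w' := hrefl (vscale a (svec i s)) w in
    hdist v w = hdist w w' /\ hdist w w' = hdist w' v' /\
    hdist w' v' = hdist v' v.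

From Stdlib Require Import Reals Lra Psatz.
Open Scope R_scope.

(** A vertex of [P_{4,3}(b)] has all three coordinates equal to [±u], where [u]
    is the root of [3u^2 - 2bu + 1] with [3u^2 < 1]; so an edge of the cube has
    Euclidean length [2u], and every vertex of the face on [S(b e)] lies at
    squared distance [a^2 - 1 + 2u(b - a)] from the centre [a e] of the
    reflecting sphere.  The reflection is a hyperbolic isometry moving both
    endpoints of an edge by the same amount, so a lateral face is a square iff
    its vertical side is as long as the edge.  Comparing [cosh] of the two
    hyperbolic lengths, this says [(b - a)^2 = a^2 - 1], i.e.
    [b = a + sqrt (a^2 - 1)], which exceeds [sqrt 3] as soon as [a > sqrt 2]. *)

Definition coord (l : axis) (p : R3) : R :=
  let '(p1, p2, p3) := p in match l with AX => p1 | AY => p2 | AZ => p3 end.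

Lemma norm2_coord p : norm2 p = coord AX p ^ 2 + coord AY p ^ 2 + coord AZ p ^ 2.
Proof. destruct p as [[p1 p2] p3]; unfold norm2, dot; simpl; ring. Qed.

Lemma norm2_vsub_coord p q :
  norm2 (vsub p q) = (coord AX p - coord AX q) ^ 2 + (coord AY p - coord AY q) ^ 2
                     + (coord AZ p - coord AZ q) ^ 2.
Proof.
  destruct p as [[p1 p2] p3], q as [[q1 q2] q3];
    unfold norm2, dot, vsub, vadd, vscale; simpl; ring.
Qed.

Lemma R3_eq_coord p q : coord AX p = coord AX q -> coord AY p = coord AY q ->
  coord AZ p = coord AZ q -> p = q.
Proof. destruct p as [[p1 p2] p3], q as [[q1 q2] q3]; simpl; intros -> -> ->; reflexivity. Qed.

Lemma norm2_nonneg p : 0 <= norm2 p.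
Proof. rewrite norm2_coord; nra. Qed.

Lemma norm2_vsubC p q : norm2 (vsub q p) = norm2 (vsub p q).
Proof. rewrite !norm2_vsub_coord; ring. Qed.

Lemma sgnR_mul_sqr s x : (sgnR s * x) ^ 2 = x ^ 2.
Proof. destruct s; simpl; ring. Qed.

Lemma sgnR_mul_inj s x y : sgnR s * x = sgnR s * y -> x = y.
Proof. destruct s; simpl; lra. Qed.

Lemma norm2_svec c i s : norm2 (vscale c (svec i s)) = c ^ 2.
Proof.
  destruct i, s; unfold norm2, vscale, dot, svec, sgnR; simpl; ring.
Qed.

Lemma norm2_vsub_svec p c i s :
  norm2 (vsub p (vscale c (svec i s))) = norm2 p - 2 * c * (sgnR s * coord i p) + c ^ 2.
Proof.
  destruct p as [[p1 p2] p3], i, s; unfold norm2, vsub, vadd, vscale, dot, svec, sgnR;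
    simpl; ring.
Qed.

Lemma norm2_vadd_vscale x k P :
  norm2 (vadd x (vscale k P)) = norm2 x + 2 * k * dot x P + k ^ 2 * norm2 P.
Proof.
  destruct x as [[x1 x2] x3], P as [[P1 P2] P3];
    unfold norm2, dot, vadd, vscale; simpl; ring.
Qed.

Lemma norm2_vsub_vadd_vscale x k l P Q :
  norm2 (vsub (vadd x (vscale k P)) (vadd x (vscale l Q)))
  = k ^ 2 * norm2 P - 2 * k * l * dot P Q + l ^ 2 * norm2 Q.
Proof.
  destruct x as [[x1 x2] x3], P as [[P1 P2] P3], Q as [[Q1 Q2] Q3];
    unfold norm2, dot, vsub, vadd, vscale; simpl; ring.
Qed.

Lemma norm2_vadd_vsub x p : norm2 p = norm2 x + 2 * dot x (vsub p x) + norm2 (vsub p x).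
Proof.
  destruct x as [[x1 x2] x3], p as [[p1 p2] p3];
    unfold norm2, dot, vsub, vadd, vscale; simpl; ring.
Qed.

Lemma norm2_vsub_split x p q :
  norm2 (vsub p q) = norm2 (vsub p x) - 2 * dot (vsub p x) (vsub q x) + norm2 (vsub q x).
Proof.
  destruct x as [[x1 x2] x3], p as [[p1 p2] p3], q as [[q1 q2] q3];
    unfold norm2, dot, vsub, vadd, vscale; simpl; ring.
Qed.

Lemma vsub_vadd x P : vsub (vadd x P) x = P.
Proof.
  destruct x as [[x1 x2] x3], P as [[P1 P2] P3];
    unfold vsub, vadd, vscale; simpl; f_equal; [f_equal|]; ring.
Qed.

Lemma dot_vscale_r P k Q : dot P (vscale k Q) = k * dot P Q.
Proof.
  destruct P as [[P1 P2] P3], Q as [[Q1 Q2] Q3]; unfold dot, vscale; simpl; ring.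
Qed.

Lemma norm2_vscale k P : norm2 (vscale k P) = k ^ 2 * norm2 P.
Proof. destruct P as [[P1 P2] P3]; unfold norm2, dot, vscale; simpl; ring. Qed.

Definition hratio (p q : R3) : R :=
  norm2 (vsub p q) / ((1 - norm2 p) * (1 - norm2 q)).

Lemma hdist_hratio p q : hdist p q = arcosh (1 + 2 * hratio p q).
Proof. unfold hdist, hratio, Rdiv; rewrite Rmult_assoc; reflexivity. Qed.

Lemma hratio_sym p q : hratio q p = hratio p q.
Proof. unfold hratio; rewrite norm2_vsubC, Rmult_comm; reflexivity. Qed.

Lemma hdist_sym p q : hdist q p = hdist p q.
Proof. rewrite !hdist_hratio, hratio_sym; reflexivity. Qed.

Lemma hratio_nonneg p q : inBall p -> inBall q -> 0 <= hratio p q.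
Proof.
  unfold inBall, hratio; intros Hp Hq.
  apply Rle_mult_inv_pos; [apply norm2_nonneg | nra].
Qed.

Lemma arcosh_inj t1 t2 : 1 <= t1 -> 1 <= t2 -> arcosh t1 = arcosh t2 -> t1 = t2.
Proof.
  unfold arcosh; intros H1 H2 H.
  pose proof (sqrt_pos (t1 * t1 - 1)); pose proof (sqrt_pos (t2 * t2 - 1)).
  apply ln_inv in H; try lra.
  destruct (Rtotal_order t1 t2) as [L | [L | L]]; auto.
  - assert (sqrt (t1 * t1 - 1) <= sqrt (t2 * t2 - 1)) by (apply sqrt_le_1_alt; nra); lra.
  - assert (sqrt (t2 * t2 - 1) <= sqrt (t1 * t1 - 1)) by (apply sqrt_le_1_alt; nra); lra.
Qed.

Lemma hdist_eq_iff p q p' q' : inBall p -> inBall q -> inBall p' -> inBall q' ->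
  hdist p q = hdist p' q' <-> hratio p q = hratio p' q'.
Proof.
  intros Hp Hq Hp' Hq'; rewrite !hdist_hratio.
  pose proof (hratio_nonneg p q Hp Hq); pose proof (hratio_nonneg p' q' Hp' Hq').
  split; [intro E; apply arcosh_inj in E; lra | intros ->; reflexivity].
Qed.

Section Reflection.

Variable x : R3.
Hypothesis Hx : 1 < norm2 x.

Lemma one_sub_norm2_hrefl p : 0 < norm2 (vsub p x) ->
  1 - norm2 (hrefl x p) = (norm2 x - 1) / norm2 (vsub p x) * (1 - norm2 p).
Proof.
  intros Hp; rewrite (norm2_vadd_vsub x p).
  unfold hrefl; rewrite norm2_vadd_vscale; field; lra.
Qed.

Lemma inBall_hrefl p : 0 < norm2 (vsub p x) -> inBall p -> inBall (hrefl x p).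
Proof.
  unfold inBall; intros Hpx Hp.
  assert (0 < (norm2 x - 1) / norm2 (vsub p x)) by (apply Rdiv_lt_0_compat; lra).
  pose proof (one_sub_norm2_hrefl p Hpx); nra.
Qed.

Lemma hratio_hrefl p q : 0 < norm2 (vsub p x) -> 0 < norm2 (vsub q x) ->
  inBall p -> inBall q -> hratio (hrefl x p) (hrefl x q) = hratio p q.
Proof.
  unfold inBall; intros Hpx Hqx Hp Hq; unfold hratio.
  rewrite !one_sub_norm2_hrefl by assumption.
  rewrite (norm2_vsub_split x p q).
  rewrite (norm2_vadd_vsub x p) in Hp |- *; rewrite (norm2_vadd_vsub x q) in Hq |- *.
  unfold hrefl; rewrite norm2_vsub_vadd_vscale; field; repeat split; lra.
Qed.

Lemma hdist_hrefl p q : 0 < norm2 (vsub p x) -> 0 < norm2 (vsub q x) ->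
  inBall p -> inBall q -> hdist (hrefl x p) (hrefl x q) = hdist p q.
Proof. intros; rewrite !hdist_hratio, hratio_hrefl; auto. Qed.

Lemma hratio_hrefl_self p : 0 < norm2 (vsub p x) -> inBall p ->
  hratio p (hrefl x p)
  = (norm2 (vsub p x) - (norm2 x - 1)) ^ 2 / ((norm2 x - 1) * (1 - norm2 p) ^ 2).
Proof.
  unfold inBall; intros Hpx Hp; unfold hratio.
  rewrite one_sub_norm2_hrefl by assumption.
  rewrite (norm2_vsub_split x p (hrefl x p)), (norm2_vadd_vsub x p) in *.
  unfold hrefl; rewrite vsub_vadd, dot_vscale_r, norm2_vscale.
  change (dot (vsub p x) (vsub p x)) with (norm2 (vsub p x)).
  field; repeat split; lra.
Qed.

End Reflection.

(** Every point [p] of [S(b e)] has signed coordinate [face_coord b p] along [e]. *)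
Definition face_coord (b : R) (p : R3) : R := (norm2 p + 1) / (2 * b).

Lemma onS_svec_coord b i s p : b <> 0 ->
  onS (vscale b (svec i s)) p -> sgnR s * coord i p = face_coord b p.
Proof.
  unfold onS, face_coord; rewrite norm2_vsub_svec, norm2_svec; intros Hb Hp.
  replace (norm2 p + 1) with (2 * b * (sgnR s * coord i p)) by lra.
  field; exact Hb.
Qed.

Lemma norm2_vsub_onS_svec a b i s p : b <> 0 -> onS (vscale b (svec i s)) p ->
  norm2 (vsub p (vscale a (svec i s))) = norm2 p - 2 * a * face_coord b p + a ^ 2.
Proof. intros Hb Hp; rewrite norm2_vsub_svec, (onS_svec_coord b); auto. Qed.

Definition small_root (b u : R) : Prop :=
  0 < u /\ 3 * u ^ 2 - 2 * b * u + 1 = 0 /\ 3 * u ^ 2 < 1.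

(* The two roots have product [1/3], so at most one of them has [3u^2 < 1]. *)
Lemma small_root_unique b u u' : small_root b u -> small_root b u' -> u = u'.
Proof.
  intros (Hu & Eu & Lu) (Hu' & Eu' & Lu').
  assert (E : (u - u') * (3 * (u + u') - 2 * b) = 0) by nra.
  apply Rmult_integral in E as [E | E]; nra.
Qed.

Lemma small_root_exists b : sqrt 3 < b -> exists u, small_root b u.
Proof.
  intros Hb.
  pose proof (sqrt_pos 3).
  assert (Hb2 : 3 < b ^ 2) by (pose proof (sqrt_sqrt 3 ltac:(lra)); nra).
  set (q := sqrt (b ^ 2 - 3)).
  assert (Hq : 0 < q) by (apply sqrt_lt_R0; lra).
  assert (Hq2 : q ^ 2 = b ^ 2 - 3) by (apply pow2_sqrt; lra).
  exists ((b - q) / 3); repeat split; nra.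
Qed.

Section CubeVertex.

Variables (b : R) (v : R3).
Hypotheses (Hb : 0 < b) (Hv : cube_vertex b v).

Lemma cube_vertex_coord_sqr l : coord l v ^ 2 = face_coord b v ^ 2.
Proof.
  destruct Hv as (_ & sx & sy & sz & Hx & Hy & Hz).
  destruct l; [rewrite <- (sgnR_mul_sqr sx) | rewrite <- (sgnR_mul_sqr sy)
              | rewrite <- (sgnR_mul_sqr sz)]; rewrite (onS_svec_coord b); auto; lra.
Qed.

Lemma cube_vertex_norm2 : norm2 v = 3 * face_coord b v ^ 2.
Proof. rewrite norm2_coord, !cube_vertex_coord_sqr; ring. Qed.

Lemma cube_vertex_small_root : small_root b (face_coord b v).
Proof.
  pose proof cube_vertex_norm2 as Hn.
  destruct Hv as [Hin _]; unfold inBall in Hin.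
  pose proof (norm2_nonneg v).
  assert (Hu : 2 * b * face_coord b v = norm2 v + 1) by (unfold face_coord; field; lra).
  split; [unfold face_coord; apply Rdiv_lt_0_compat; lra | split; lra].
Qed.

End CubeVertex.

Section FaceEdge.

Variables (b : R) (i : axis) (s : bool) (v w : R3).
Hypotheses (Hb : 0 < b) (Hvw : face_edge b i s v w).

Lemma face_edge_face_coord : face_coord b w = face_coord b v.
Proof.
  destruct Hvw as (Hv & Hw & _).
  apply (small_root_unique b); apply cube_vertex_small_root; auto.
Qed.

Lemma face_edge_norm2 : norm2 w = norm2 v.
Proof.
  destruct Hvw as (Hv & Hw & _).
  rewrite (cube_vertex_norm2 b v), (cube_vertex_norm2 b w), face_edge_face_coord; auto.
Qed.

(* [v] and [w] agree on the axes of their two common face spheres and, being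
   distinct, have opposite coordinates on the third axis. *)
Lemma face_edge_length : norm2 (vsub v w) = 4 * face_coord b v ^ 2.
Proof.
  pose proof face_edge_face_coord as Hu.
  destruct Hvw as (Hv & Hw & Hne & Siv & Siw & j & t & Hji & Sjv & Sjw).
  assert (Same : forall l r, onS (vscale b (svec l r)) v -> onS (vscale b (svec l r)) w ->
            coord l v = coord l w).
  { intros l r Hlv Hlw; apply (sgnR_mul_inj r).
    rewrite (onS_svec_coord b), (onS_svec_coord b), Hu; auto; lra. }
  assert (Flip : forall l, coord l v <> coord l w ->
            (coord l v - coord l w) ^ 2 = 4 * face_coord b v ^ 2).
  { intros l Hl.
    pose proof (cube_vertex_coord_sqr b v Hb Hv l) as Cv.
    pose proof (cube_vertex_coord_sqr b w Hb Hw l) as Cw; rewrite Hu in Cw.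
    assert (E : (coord l v - coord l w) * (coord l v + coord l w) = 0) by nra.
    apply Rmult_integral in E as [E | E]; [lra | nra]. }
  pose proof (Same _ _ Siv Siw) as Ci; pose proof (Same _ _ Sjv Sjw) as Cj.
  rewrite norm2_vsub_coord.
  destruct i, j; try congruence; simpl in Ci, Cj; rewrite ?Ci, ?Cj, ?Rminus_diag;
    match goal with
    | |- context [(coord ?l v - coord ?l w) ^ 2] =>
        rewrite (Flip l); [ring | intro Hl; apply Hne, R3_eq_coord; auto]
    end.
Qed.

Lemma face_edge_hratio :
  hratio v w = 4 * face_coord b v ^ 2 / (1 - 3 * face_coord b v ^ 2) ^ 2.
Proof.
  destruct Hvw as (Hv & _).
  destruct (cube_vertex_small_root b v Hb Hv) as (_ & _ & Lu).
  unfold hratio; rewrite face_edge_length, face_edge_norm2, (cube_vertex_norm2 b v Hb Hv).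
  field; lra.
Qed.

End FaceEdge.

Lemma face_edge_exists b : sqrt 3 < b -> exists v w, face_edge b AX true v w.
Proof.
  intros Hb; destruct (small_root_exists b Hb) as (c & Hc & Ec & Lc).
  exists (c, c, c), (c, c, - c).
  unfold face_edge, cube_vertex, inBall, onS, norm2, dot, vsub, vadd, vscale, svec, sgnR;
    simpl; repeat split; try lra.
  - exists true, true, true; simpl; repeat split; lra.
  - exists true, true, false; simpl; repeat split; lra.
  - intro H; injection H; lra.
  - exists AY, true; simpl; repeat split; try lra; discriminate.
Qed.

Section FaceVertex.

Variables (a b : R) (i : axis) (s : bool) (p : R3).
Hypotheses (Ha : 1 < a) (Hab : a < b) (Hp : cube_vertex b p)
           (Hon : onS (vscale b (svec i s)) p).

Lemma face_vertex_dist_center :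
  norm2 (vsub p (vscale a (svec i s))) = a ^ 2 - 1 + 2 * face_coord b p * (b - a).
Proof.
  destruct (cube_vertex_small_root b p ltac:(lra) Hp) as (_ & E & _).
  rewrite (norm2_vsub_onS_svec a b), (cube_vertex_norm2 b p); auto; lra.
Qed.

Lemma face_vertex_dist_center_pos : 0 < norm2 (vsub p (vscale a (svec i s))).
Proof.
  destruct (cube_vertex_small_root b p ltac:(lra) Hp) as (Hu & _).
  rewrite face_vertex_dist_center; nra.
Qed.

(* The power [norm2 (p - a e) - (a^2 - 1)] of [p] with respect to [S(a e)] is [2u(b - a)]. *)
Lemma face_vertex_hratio_hrefl :
  hratio p (hrefl (vscale a (svec i s)) p)
  = (b - a) ^ 2 / (a ^ 2 - 1) * (4 * face_coord b p ^ 2 / (1 - 3 * face_coord b p ^ 2) ^ 2).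
Proof.
  destruct (cube_vertex_small_root b p ltac:(lra) Hp) as (_ & _ & Lu).
  rewrite hratio_hrefl_self.
  - rewrite face_vertex_dist_center, norm2_svec, (cube_vertex_norm2 b p ltac:(lra) Hp).
    field; nra.
  - rewrite norm2_svec; nra.
  - apply face_vertex_dist_center_pos.
  - apply Hp.
Qed.

End FaceVertex.

Definition lateral_face_square (x v w : R3) : Prop :=
  hdist v w = hdist w (hrefl x w) /\ hdist w (hrefl x w) = hdist (hrefl x w) (hrefl x v) /\
  hdist (hrefl x w) (hrefl x v) = hdist (hrefl x v) v.

Lemma lateral_face_square_iff a b i s v w : 1 < a -> a < b -> face_edge b i s v w ->
  lateral_face_square (vscale a (svec i s)) v w <-> (b - a) ^ 2 = a ^ 2 - 1.
Proof.
  intros Ha Hab Hvw.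
  pose proof Hvw as (Hv & Hw & _ & Siv & Siw & _).
  set (x := vscale a (svec i s)).
  assert (Hx : 1 < norm2 x) by (unfold x; rewrite norm2_svec; nra).
  pose proof (face_vertex_dist_center_pos a b i s v Ha Hab Hv Siv) as Dv.
  pose proof (face_vertex_dist_center_pos a b i s w Ha Hab Hw Siw) as Dw.
  assert (Bv : inBall v) by apply Hv.
  assert (Bw : inBall w) by apply Hw.
  assert (Top : hdist (hrefl x w) (hrefl x v) = hdist v w)
    by (rewrite hdist_hrefl, hdist_sym; auto).
  assert (Sides : hdist (hrefl x v) v = hdist w (hrefl x w)).
  { rewrite hdist_sym, !hdist_hratio; unfold x.
    rewrite !(face_vertex_hratio_hrefl a b i s), (face_edge_face_coord b i s v w); auto; lra. }
  assert (Sym : forall A B : R, (A = B /\ B = A /\ A = B) <-> A = B)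
    by (intros A B; split; [tauto | intros ->; auto]).
  unfold lateral_face_square; rewrite Top, Sides, Sym.
  rewrite hdist_eq_iff by (try apply inBall_hrefl; auto).
  pose proof (face_vertex_hratio_hrefl a b i s w Ha Hab Hw Siw) as Ew.
  rewrite (face_edge_face_coord b i s v w) in Ew by (auto; lra).
  unfold x; rewrite Ew, (face_edge_hratio b i s v w) by (auto; lra).
  destruct (cube_vertex_small_root b v ltac:(lra) Hv) as (Hu & _ & Lu).
  set (t := 4 * face_coord b v ^ 2 / (1 - 3 * face_coord b v ^ 2) ^ 2).
  assert (Ht : 0 < t) by (apply Rdiv_lt_0_compat; nra).
  assert (Hk : (b - a) ^ 2 = (b - a) ^ 2 / (a ^ 2 - 1) * (a ^ 2 - 1)) by (field; nra).
  split.
  - intros E.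
    assert (K1 : (b - a) ^ 2 / (a ^ 2 - 1) = 1) by nra.
    rewrite Hk, K1; ring.
  - intros E; rewrite E.
    field; nra.
Qed.

Theorem mainTheorem2 :
  forall (n : nat), (4 < n)%nat ->
  forall a : R, a > sqrt 2 ->
    (* dihedral angle of P_{4,3}(a) is 2*pi/n:  cos(2 pi/n) = 1/(a^2-1) *)
    cos (2 * PI / INR n) = 1 / (a ^ 2 - 1) ->
    exists! b : R, (b > a /\ b > sqrt 3) /\ lateral_faces_are_squares a b.
Proof.
  (* The dihedral angle only singles out [a]; the argument works for any [a > sqrt 2]. *)
  intros _ _ a Ha _.
  assert (Ha2 : 2 < a ^ 2).
  { pose proof (sqrt_pos 2); pose proof (sqrt_sqrt 2 ltac:(lra)); nra. }
  assert (Ha1 : 1 < a) by (pose proof (sqrt_pos 2); nra).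
  set (r := sqrt (a ^ 2 - 1)).
  assert (Hr : 1 < r) by (unfold r; rewrite <- sqrt_1 at 1; apply sqrt_lt_1_alt; split; lra).
  assert (Hr2 : r ^ 2 = a ^ 2 - 1) by (apply pow2_sqrt; lra).
  assert (H3 : sqrt 3 < 2).
  { rewrite <- (sqrt_pow2 2) by lra; apply sqrt_lt_1_alt; split; lra. }
  exists (a + r); split.
  - split; [lra |].
    intros i s v w Hvw.
    apply (lateral_face_square_iff a (a + r) i s v w); [lra | lra | exact Hvw |].
    rewrite <- Hr2; f_equal; ring.
  - intros b [[Hba Hb3] Hsq].
    destruct (face_edge_exists b Hb3) as (v & w & Hvw).
    assert (E : (b - a) ^ 2 = a ^ 2 - 1)
      by exact (proj1 (lateral_face_square_iff a b AX true v w Ha1 Hba Hvw) (Hsq _ _ _ _ Hvw)).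
    unfold r; rewrite <- E, sqrt_pow2; lra.
Qed.
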